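(* Let $\beta>1$. For each $t_0>0$ there exists a constant $C_1>0$ such that $$C_1\beta^{-m(t,u)}\le|t-u|\le\beta^{-m(t,u)}$$ for all $t,u\in\mathcal U\cap[t_0,1]$.
   Context: Let $\gamma=\beta-1$ if $\beta$ is an integer and $\gamma=\lfloor\beta\rfloor$ otherwise. $T_\beta(x)=\beta x-\lfloor\beta x\rfloor$ on $[0,1)$. For $x\in(0,1]$ the quasi-greedy $\beta$-expansion is the lexicographically largest sequence in $\{0,\dots,\gamma\}^{\mathbb N}$, not eventually zero, with $x=\sum_i a_i\beta^{-i}$. For $t,u\in(0,1]$ with quasi-greedy expansions $(t_i),(u_i)$, $m(t,u)=\sup\{k\ge1\colon t_i=u_i\text{ for all }i\in\{1,\dots,k\}\}$ is the length of the longest common prefix (taken as $0$ if $t_1\ne u_1$). For $0<t<1$ let $K(t)=\{x\in[0,1)\colon T_\beta^k(x)\notin(0,t)\ \forall k\ge0\}$, $K(0)=[0,1)$, $K(1)=\{0\}$. A parameter $t\in[0,1]$ is a bifurcation parameter if $t\in\{0,1\}$, or $0<t<1$ and for every $\delta>0$ there is $t'\in(t-\delta,t+\delta)$ with $K(t')\ne K(t)$; $\mathcal U$ is the set of bifurcation parameters in $[0,1)$. *)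

From Stdlib Require Import Reals Lra.
Open Scope R_scope.

Definition is_int (x : R) : Prop := exists z : Z, x = IZR z.

(* floor via Stdlib's Int_part (= up x - 1, the greatest integer <= x) *)
Definition floorR (x : R) : R := IZR (Int_part x).

Definition digit_ok (beta : R) (d : nat) : Prop :=
  (is_int beta -> INR d <= beta - 1) /\ (~ is_int beta -> INR d <= floorR beta).

Definition Tb (beta x : R) : R := beta * x - floorR (beta * x).

(* Sequences are 0-indexed: a i stands for the paper's a_(i+1). *)
Definition beta_expansion (beta x : R) (a : nat -> nat) : Prop :=
  (forall i, digit_ok beta (a i)) /\
  (forall n, exists k, (n <= k)%nat /\ a k <> 0%nat) /\
  infinite_sum (fun i => INR (a i) / beta ^ (S i)) x.

Definition lex_le (b a : nat -> nat) : Prop :=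
  (forall i, b i = a i) \/
  (exists n, (forall i, (i < n)%nat -> b i = a i) /\ (b n < a n)%nat).

Definition quasi_greedy (beta x : R) (a : nat -> nat) : Prop :=
  beta_expansion beta x a /\
  (forall b, beta_expansion beta x b -> lex_le b a).

(* m = length of the longest common prefix of a and b; None means infinite *)
Definition common_prefix (a b : nat -> nat) (m : option nat) : Prop :=
  match m with
  | None => forall i, a i = b i
  | Some k => (forall i, (i < k)%nat -> a i = b i) /\ a k <> b k
  end.

Definition bpow_neg (beta : R) (m : option nat) : R :=
  match m with
  | None => 0
  | Some k => / beta ^ k
  end.

Definition K (beta t x : R) : Prop :=
  (t = 0 /\ 0 <= x < 1) \/
  (t = 1 /\ x = 0) \/
  (0 < t < 1 /\ 0 <= x < 1 /\
     forall k : nat, ~ (0 < Nat.iter k (Tb beta) x < t)).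

(* t is a bifurcation parameter (perturbations t' range over [0,1]) *)
Definition bifurcation (beta t : R) : Prop :=
  t = 0 \/ t = 1 \/
  (0 < t < 1 /\
   forall delta, delta > 0 ->
     exists t', 0 <= t' <= 1 /\ t - delta < t' < t + delta /\
       ~ (forall x, K beta t' x <-> K beta t x)).

Definition in_U (beta t : R) : Prop := 0 <= t < 1 /\ bifurcation beta t.

From Stdlib Require Import Reals ZArith Lra Lia Classical FunctionalExtensionality.
Open Scope R_scope.

(* Write x_n = beta^n (t - sum_(i<n) a_i beta^-(i+1)) for the tails of the
   quasi-greedy expansion a of t; they lie in (0, 1].  If a and b first differ
   at index m, then beta^m (t - u) = x_m - y_m, which gives the upper bound, and
   if a_m > b_m then beta^(m+1) (t - u) >= x_(m+1).  For a bifurcation parameter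
   t, a tail x_j < t can only come after an earlier tail equal to 1: otherwise
   T_beta^j is affine near t and maps a neighbourhood of t below t, which makes
   K locally constant at t.  Applied to u this keeps x_1, ..., x_m above u >= t_0;
   applied to t it shows that either x_(m+1) >= t_0 or x_(m+1) is a tail of the
   quasi-greedy expansion of 1 reached after a run of tails >= t_0.  Such tails
   are bounded below by a constant depending only on beta and t_0. *)

Lemma exists_pos_lower_bound (g : nat -> R) (n : nat) :
  (forall i, (i <= n)%nat -> 0 < g i) ->
  exists mu, 0 < mu /\ forall i, (i <= n)%nat -> mu <= g i.
Proof.
  induction n as [|n IH]; intros Hg.
  - exists (g 0%nat). split; [apply Hg; lia|].
    intros i Hi. replace i with 0%nat by lia. lra.
  - destruct IH as [mu [Hmu Hle]]; [intros i Hi; apply Hg; lia|].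
    exists (Rmin mu (g (S n))). split; [apply Rmin_glb_lt; auto; apply Hg; lia|].
    intros i Hi. destruct (Nat.eq_dec i (S n)) as [->|Hne]; [apply Rmin_r|].
    eapply Rle_trans; [apply Rmin_l|]. apply Hle; lia.
Qed.

Lemma exists_run_lower_bound (g : nat -> R) (s : R) :
  0 < s -> (forall k, 0 < g k) ->
  exists c, 0 < c <= s /\
    forall k, (forall i, (i < k)%nat -> s <= g i) -> c <= g k.
Proof.
  intros Hs Hg. destruct (classic (exists k, g k < s)) as [[k Hk]|Hnone].
  - destruct (exists_pos_lower_bound g k) as [mu [Hmu Hle]]; [auto|].
    exists (Rmin s mu). split; [split; [apply Rmin_glb_lt|apply Rmin_l]; lra|].
    intros k' Hrun. destruct (Nat.le_gt_cases k' k) as [Hk'|Hk'].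
    + eapply Rle_trans; [apply Rmin_r|]. auto.
    + specialize (Hrun k Hk'). lra.
  - exists s. split; [lra|].
    intros k _. apply Rnot_lt_le. intros Hk. apply Hnone. eauto.
Qed.

Lemma Un_cv_0_scal (c : R) (u : nat -> R) :
  Un_cv u 0 -> Un_cv (fun n => c * u n) 0.
Proof.
  intros Hu. rewrite <- (Rmult_0_r c). apply CV_mult; [|exact Hu].
  intros e He. exists 0%nat. intros n _. unfold R_dist. rewrite Rminus_diag, Rabs_R0. lra.
Qed.

Lemma infinite_sum_ge_term (f : nat -> R) (l : R) (k : nat) :
  (forall i, 0 <= f i) -> infinite_sum f l -> f k <= l.
Proof.
  intros Hf Hs. apply Rle_trans with (sum_f_R0 f k).
  - destruct k as [|k]; simpl; [lra|]. pose proof (cond_pos_sum f k Hf). lra.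
  - apply growing_ineq; [|exact Hs]. intros n. simpl. specialize (Hf (S n)). lra.
Qed.

Lemma avoids_iff (f : R -> R) (j : nat) (s s' : R) :
  s <= s' -> (forall y, s <= y < s' -> 0 < Nat.iter j f y < s) ->
  forall x, (forall k, ~ (0 < Nat.iter k f x < s)) <->
            (forall k, ~ (0 < Nat.iter k f x < s')).
Proof.
  intros Hss' Hret x. split; intros Havoid k Hk.
  - destruct (Rlt_le_dec (Nat.iter k f x) s) as [Hlt|Hge].
    + apply (Havoid k). lra.
    + apply (Havoid (j + k)%nat). rewrite Nat.iter_add. apply Hret. lra.
  - apply (Havoid k). lra.
Qed.

Section BetaExpansions.
Variable beta : R.
Hypothesis beta_gt_1 : 1 < beta.

Let beta_pow_pos n : 0 < beta ^ n.
Proof. apply pow_lt; lra. Qed.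

Fixpoint beta_tail (x : R) (a : nat -> nat) (n : nat) : R :=
  match n with O => x | S n => beta * beta_tail x a n - INR (a n) end.

Definition digit_series (a : nat -> nat) (i : nat) : R := INR (a i) / beta ^ S i.

Definition shift (a : nat -> nat) (n : nat) : nat -> nat := fun i => a (n + i)%nat.

Lemma beta_tail_add x a n k :
  beta_tail x a (n + k) = beta_tail (beta_tail x a n) (shift a n) k.
Proof.
  induction k as [|k IH]; simpl; [now rewrite Nat.add_0_r|].
  rewrite Nat.add_succ_r. simpl. now rewrite IH.
Qed.

Lemma beta_tail_eq_prefix x a b n k :
  (forall i, (i < n)%nat -> a i = b i) -> (k <= n)%nat ->
  beta_tail x a k = beta_tail x b k.
Proof.
  intros Hab. induction k as [|k IH]; intros Hk; simpl; [reflexivity|].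
  rewrite IH, Hab by lia. reflexivity.
Qed.

Lemma beta_tail_sub_prefix t u a b m k :
  (forall i, (i < m)%nat -> a i = b i) -> (k <= m)%nat ->
  beta_tail t a k - beta_tail u b k = beta ^ k * (t - u).
Proof.
  intros Hab. induction k as [|k IH]; intros Hk; simpl; [ring|].
  rewrite Hab by lia. rewrite Rmult_assoc, <- IH by lia. ring.
Qed.

Lemma partial_sum_beta_tail x a N :
  sum_f_R0 (digit_series a) N = x - beta_tail x a (S N) / beta ^ S N.
Proof.
  induction N as [|N IH].
  - unfold digit_series. simpl. field. lra.
  - simpl sum_f_R0. rewrite IH. unfold digit_series.
    pose proof (beta_pow_pos N). simpl. field. lra.
Qed.

Lemma infinite_sum_iff_beta_tail_vanishes x a :
  infinite_sum (digit_series a) x <->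
  Un_cv (fun n => beta_tail x a n / beta ^ n) 0.
Proof.
  assert (Hdist : forall N, R_dist (sum_f_R0 (digit_series a) N) x =
                            R_dist (beta_tail x a (S N) / beta ^ S N) 0).
  { intros N. rewrite (partial_sum_beta_tail x). unfold R_dist.
    rewrite <- Rabs_Ropp. f_equal. ring. }
  split; intros Hcv e He; destruct (Hcv e He) as [N HN].
  - exists (S N). intros [|n] Hn; [lia|]. rewrite <- Hdist. apply HN. lia.
  - exists N. intros n Hn. rewrite Hdist. apply HN. lia.
Qed.

Lemma infinite_sum_shift x a n :
  infinite_sum (digit_series (shift a n)) (beta_tail x a n) <->
  infinite_sum (digit_series a) x.
Proof.
  rewrite !infinite_sum_iff_beta_tail_vanishes.
  set (w := fun k => beta_tail x a k / beta ^ k).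
  pose proof (beta_pow_pos n) as Hbn.
  assert (Hw : forall k, beta_tail (beta_tail x a n) (shift a n) k / beta ^ k =
                         beta ^ n * w (k + n)%nat).
  { intros k. unfold w. rewrite <- beta_tail_add, Nat.add_comm, pow_add.
    pose proof (beta_pow_pos k). field. lra. }
  split; intros Hcv.
  - apply (CV_shift w n).
    apply (Un_cv_ext (fun k => / beta ^ n * (beta ^ n * w (k + n)%nat))).
    { intros k. field. lra. }
    apply Un_cv_0_scal. exact (Un_cv_ext _ _ Hw 0 Hcv).
  - apply (Un_cv_ext (fun k => beta ^ n * w (k + n)%nat)).
    { intros k. symmetry. apply Hw. }
    apply Un_cv_0_scal, CV_shift', Hcv.
Qed.

Lemma beta_expansion_pos x a : beta_expansion beta x a -> 0 < x.
Proof.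
  intros [_ [Hnz Hs]]. destruct (Hnz 0%nat) as [k [_ Hk]].
  apply Rlt_le_trans with (digit_series a k).
  - apply Rdiv_lt_0_compat; [apply lt_0_INR; lia|apply beta_pow_pos].
  - apply infinite_sum_ge_term; [|exact Hs].
    intros i. apply Rmult_le_pos; [apply pos_INR|left; apply Rinv_0_lt_compat, beta_pow_pos].
Qed.

Lemma beta_expansion_shift x a n :
  beta_expansion beta x a -> beta_expansion beta (beta_tail x a n) (shift a n).
Proof.
  intros [Hd [Hnz Hs]]. split; [|split].
  - intros i. apply Hd.
  - intros N. destruct (Hnz (n + N)%nat) as [k [Hk Hak]].
    exists (k - n)%nat. unfold shift. split; [lia|].
    replace (n + (k - n))%nat with k by lia. exact Hak.
  - apply infinite_sum_shift. exact Hs.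
Qed.

Lemma beta_tail_pos x a n : beta_expansion beta x a -> 0 < beta_tail x a n.
Proof.
  intros Ha. exact (beta_expansion_pos _ _ (beta_expansion_shift x a n Ha)).
Qed.

Definition splice (a : nat -> nat) (n : nat) (c : nat -> nat) : nat -> nat :=
  fun i => if Nat.ltb i n then a i else c (i - n)%nat.

Lemma splice_lt a n c i : (i < n)%nat -> splice a n c i = a i.
Proof. intros Hi. unfold splice. now rewrite (proj2 (Nat.ltb_lt i n) Hi). Qed.

Lemma shift_splice a n c : shift (splice a n c) n = c.
Proof.
  apply functional_extensionality. intros i. unfold shift, splice.
  rewrite (proj2 (Nat.ltb_ge (n + i) n)) by lia. f_equal. lia.
Qed.

Lemma beta_expansion_splice x a n c :
  beta_expansion beta x a -> beta_expansion beta (beta_tail x a n) c ->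
  beta_expansion beta x (splice a n c).
Proof.
  intros [Had [_ Has]] [Hcd [Hcnz Hcs]]. split; [|split].
  - intros i. unfold splice. destruct (Nat.ltb i n); auto.
  - intros N. destruct (Hcnz N) as [k [Hk Hck]]. exists (n + k)%nat. split; [lia|].
    change (splice a n c (n + k)) with (shift (splice a n c) n k).
    now rewrite shift_splice.
  - apply (infinite_sum_shift x _ n). rewrite shift_splice.
    rewrite (beta_tail_eq_prefix x (splice a n c) a n n); auto.
    intros i Hi. now apply splice_lt.
Qed.

Lemma not_lex_le_of_first_gt a b n :
  (forall i, (i < n)%nat -> a i = b i) -> (a n < b n)%nat -> ~ lex_le b a.
Proof.
  intros Hpre Hn [Heq | [k [Hk Hlt]]].
  - rewrite Heq in Hn. lia.
  - destruct (Nat.lt_total k n) as [Hkn|[->|Hnk]].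
    + rewrite Hpre in Hlt by exact Hkn. lia.
    + lia.
    + rewrite Hk in Hn by exact Hnk. lia.
Qed.

Lemma lex_le_antisym a b : lex_le a b -> lex_le b a -> a = b.
Proof.
  intros [Heq | [n [Hpre Hlt]]] Hba.
  - now apply functional_extensionality.
  - exfalso. exact (not_lex_le_of_first_gt a b n Hpre Hlt Hba).
Qed.

Lemma quasi_greedy_unique x a b :
  quasi_greedy beta x a -> quasi_greedy beta x b -> a = b.
Proof.
  intros [Ha Hamax] [Hb Hbmax]. exact (lex_le_antisym a b (Hbmax a Ha) (Hamax b Hb)).
Qed.

Lemma quasi_greedy_shift x a n :
  quasi_greedy beta x a -> quasi_greedy beta (beta_tail x a n) (shift a n).
Proof.
  intros [Ha Hmax]. split; [now apply beta_expansion_shift|].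
  intros c Hc. rewrite <- (shift_splice a n c) at 1.
  destruct (Hmax _ (beta_expansion_splice x a n c Ha Hc)) as [Heq | [k [Hpre Hlt]]].
  - left. intros i. apply Heq.
  - destruct (Nat.le_gt_cases n k) as [Hnk|Hkn].
    + right. exists (k - n)%nat. unfold shift. split.
      * intros i Hi. apply Hpre. lia.
      * now replace (n + (k - n))%nat with k by lia.
    + rewrite splice_lt in Hlt by exact Hkn. lia.
Qed.

Definition int_below (w : R) : Z := (- Int_part (- w) - 1)%Z.

Lemma int_below_spec w : IZR (int_below w) < w <= IZR (int_below w) + 1.
Proof.
  unfold int_below. destruct (base_Int_part (- w)) as [H1 H2].
  rewrite minus_IZR, opp_IZR. lra.
Qed.

Lemma digit_ok_of_lt (d : nat) : INR d < beta -> digit_ok beta d.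
Proof.
  intros Hd. split; rewrite INR_IZR_INZ in *.
  - intros [z ->]. apply lt_IZR in Hd. rewrite <- minus_IZR. apply IZR_le. lia.
  - intros _. unfold floorR. destruct (base_Int_part beta) as [_ H].
    assert (Z.of_nat d < Int_part beta + 1)%Z by (apply lt_IZR; rewrite plus_IZR; lra).
    apply IZR_le. lia.
Qed.

Lemma inv_pow_lt y : 0 < y -> exists N, / beta ^ N < y.
Proof.
  intros Hy. destruct (pow_lt_1_zero (/ beta)) with (y := y) as [N HN]; [|exact Hy|].
  - rewrite Rabs_right; [|left; apply Rinv_0_lt_compat; lra].
    rewrite <- Rinv_1. apply Rinv_1_lt_contravar; lra.
  - exists N. specialize (HN N (le_n N)). rewrite pow_inv in HN.
    rewrite Rabs_right in HN; [exact HN|left; apply Rinv_0_lt_compat, beta_pow_pos].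
Qed.

Section QuasiGreedyAlgorithm.
Variable z : R.
Hypothesis z_pos_le_1 : 0 < z <= 1.

Fixpoint qg_rem (n : nat) : R :=
  match n with
  | O => z
  | S n => beta * qg_rem n - IZR (int_below (beta * qg_rem n))
  end.

Definition qg_digit (n : nat) : nat := Z.to_nat (int_below (beta * qg_rem n)).

Lemma qg_rem_bounds n : 0 < qg_rem n <= 1.
Proof.
  induction n as [|n IH]; simpl; [exact z_pos_le_1|].
  pose proof (int_below_spec (beta * qg_rem n)). lra.
Qed.

Lemma INR_qg_digit n : INR (qg_digit n) = IZR (int_below (beta * qg_rem n)).
Proof.
  unfold qg_digit. rewrite INR_IZR_INZ, Z2Nat.id; [reflexivity|].
  pose proof (qg_rem_bounds n). pose proof (int_below_spec (beta * qg_rem n)).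
  assert (-1 < int_below (beta * qg_rem n))%Z; [apply lt_IZR; nra|lia].
Qed.

Lemma beta_tail_qg_digit n : beta_tail z qg_digit n = qg_rem n.
Proof. induction n as [|n IH]; simpl; [reflexivity|]. now rewrite IH, INR_qg_digit. Qed.

Lemma qg_digit_not_eventually_zero n : exists k, (n <= k)%nat /\ qg_digit k <> 0%nat.
Proof.
  apply NNPP. intros Hzero.
  assert (Hgrow : forall k, qg_rem (n + k) = beta ^ k * qg_rem n).
  { induction k as [|k IH]; [simpl; rewrite Nat.add_0_r; ring|].
    rewrite Nat.add_succ_r. simpl. rewrite <- INR_qg_digit, IH.
    replace (qg_digit (n + k)) with 0%nat; [simpl; ring|].
    apply NNPP. intros Hk. apply Hzero. exists (n + k)%nat. split; [lia|auto]. }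
  destruct (qg_rem_bounds n) as [Hn _].
  destruct (inv_pow_lt (qg_rem n) Hn) as [N HN].
  pose proof (qg_rem_bounds (n + N)) as [_ HnN]. rewrite Hgrow in HnN.
  apply (Rmult_lt_compat_l (beta ^ N)) in HN; [|apply beta_pow_pos].
  rewrite Rinv_r in HN; [lra|apply Rgt_not_eq, beta_pow_pos].
Qed.

Lemma infinite_sum_qg_digit : infinite_sum (digit_series qg_digit) z.
Proof.
  apply infinite_sum_iff_beta_tail_vanishes.
  intros e He. destruct (inv_pow_lt e He) as [N HN]. exists N. intros n Hn.
  unfold R_dist. rewrite beta_tail_qg_digit, Rminus_0_r.
  pose proof (qg_rem_bounds n). pose proof (beta_pow_pos n).
  rewrite Rabs_right by (left; apply Rdiv_lt_0_compat; lra).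
  apply Rle_lt_trans with (/ beta ^ N); [|exact HN].
  apply Rle_trans with (/ beta ^ n).
  - unfold Rdiv. rewrite <- (Rmult_1_l (/ beta ^ n)) at 2.
    apply Rmult_le_compat_r; [left; apply Rinv_0_lt_compat|]; lra.
  - apply Rinv_le_contravar; [apply beta_pow_pos|apply Rle_pow; [lra|exact Hn]].
Qed.

Lemma beta_expansion_qg_digit : beta_expansion beta z qg_digit.
Proof.
  split; [|split; [exact qg_digit_not_eventually_zero|exact infinite_sum_qg_digit]].
  intros i. apply digit_ok_of_lt. rewrite INR_qg_digit.
  pose proof (qg_rem_bounds i). pose proof (int_below_spec (beta * qg_rem i)). nra.
Qed.

End QuasiGreedyAlgorithm.

(* A tail above 1 would let the quasi-greedy algorithm restart there with a
   larger digit, producing a lexicographically larger expansion. *)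
Lemma quasi_greedy_beta_tail_le_1 x a n :
  x <= 1 -> quasi_greedy beta x a -> beta_tail x a n <= 1.
Proof.
  intros Hx [Ha Hmax]. induction n as [|n IH]; simpl; [exact Hx|].
  apply Rnot_lt_le. intros Hgt.
  set (y := beta_tail x a n) in *.
  assert (Hy : 0 < y <= 1) by (split; [apply beta_tail_pos, Ha|exact IH]).
  apply (not_lex_le_of_first_gt a (splice a n (qg_digit y)) n).
  - intros i Hi. symmetry. now apply splice_lt.
  - unfold splice. rewrite Nat.ltb_irrefl, Nat.sub_diag.
    apply INR_lt. rewrite (INR_qg_digit y Hy). simpl. pose proof (int_below_spec (beta * y)). lra.
  - apply Hmax, beta_expansion_splice; [exact Ha|]. now apply beta_expansion_qg_digit.
Qed.

Lemma Tb_eq_frac w (d : nat) f : beta * w = INR d + f -> 0 <= f < 1 -> Tb beta w = f.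
Proof.
  intros Hw Hf. unfold Tb, floorR, Int_part. rewrite Hw.
  rewrite <- (tech_up (INR d + f) (Z.of_nat d + 1));
    rewrite ?plus_IZR, <- ?INR_IZR_INZ; try lra.
  replace (Z.of_nat d + 1 - 1)%Z with (Z.of_nat d) by lia. rewrite <- INR_IZR_INZ. ring.
Qed.

Lemma iter_Tb_perturb t a eps k :
  (forall i, (1 <= i <= k)%nat -> 0 <= beta_tail t a i + beta ^ i * eps < 1) ->
  Nat.iter k (Tb beta) (t + eps) = beta_tail t a k + beta ^ k * eps.
Proof.
  induction k as [|k IH]; intros Hfrac; simpl; [ring|].
  rewrite IH by (intros i Hi; apply Hfrac; lia).
  apply (Tb_eq_frac _ (a k)); [ring|]. apply (Hfrac (S k)). lia.
Qed.

Lemma iter_Tb_close t a j mu y :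
  0 < mu -> (forall i, (1 <= i <= j)%nat -> mu <= beta_tail t a i <= 1 - mu) ->
  Rabs (y - t) < mu / (2 * beta ^ j) ->
  Rabs (Nat.iter j (Tb beta) y - beta_tail t a j) < mu / 2.
Proof.
  intros Hmu Hx Hy.
  assert (Hsmall : forall i, (i <= j)%nat -> Rabs (beta ^ i * (y - t)) < mu / 2).
  { intros i Hi. rewrite Rabs_mult, (Rabs_right (beta ^ i)) by (left; apply beta_pow_pos).
    apply Rle_lt_trans with (beta ^ j * Rabs (y - t)).
    - apply Rmult_le_compat_r; [apply Rabs_pos|apply Rle_pow; [lra|exact Hi]].
    - pose proof (beta_pow_pos j).
      replace (mu / 2) with (beta ^ j * (mu / (2 * beta ^ j))) by (field; lra).
      apply Rmult_lt_compat_l; assumption. }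
  replace y with (t + (y - t)) by ring.
  rewrite (iter_Tb_perturb t a).
  - replace (beta_tail t a j + beta ^ j * (y - t) - beta_tail t a j)
      with (beta ^ j * (y - t)) by ring.
    apply Hsmall. lia.
  - intros i Hi. pose proof (Hx i Hi). pose proof (Hsmall i ltac:(lia)) as Hs.
    apply Rabs_def2 in Hs. lra.
Qed.

Lemma K_interior s x : 0 < s < 1 ->
  (K beta s x <-> 0 <= x < 1 /\ forall k, ~ (0 < Nat.iter k (Tb beta) x < s)).
Proof.
  intros Hs. unfold K. split; [intros [[? _]|[[? _]|[_ H]]]; [lra|lra|exact H]|].
  intros H. right; right. split; [exact Hs|exact H].
Qed.

(* Every point between t and a nearby t' enters (0, min t t') after j steps,
   so it cannot distinguish K t from K t'. *)
Lemma not_bifurcation_of_uniform_return t j delta :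
  0 < delta <= 1 - t ->
  (forall y, Rabs (y - t) < delta -> 0 < Nat.iter j (Tb beta) y < t - delta) ->
  ~ bifurcation beta t.
Proof.
  intros Hdelta Hret.
  assert (Ht : delta < t).
  { pose proof (Hret t ltac:(rewrite Rminus_diag, Rabs_R0; lra)). lra. }
  intros [H0|[H1|[_ Hbif]]]; [lra|lra|].
  destruct (Hbif delta ltac:(lra)) as [t' [Ht'01 [Ht't Hne]]].
  apply Hne. intros x. rewrite (K_interior t' x), (K_interior t x) by lra.
  destruct (Rle_lt_dec t t') as [Hle|Hlt].
  - assert (Hiff := avoids_iff (Tb beta) j t t' Hle).
    enough (Hret' : forall y, t <= y < t' -> 0 < Nat.iter j (Tb beta) y < t)
      by (specialize (Hiff Hret' x); tauto).
    intros y Hy. pose proof (Hret y ltac:(apply Rabs_def1; lra)). lra.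
  - assert (Hiff := avoids_iff (Tb beta) j t' t (Rlt_le _ _ Hlt)).
    enough (Hret' : forall y, t' <= y < t -> 0 < Nat.iter j (Tb beta) y < t')
      by (specialize (Hiff Hret' x); tauto).
    intros y Hy. pose proof (Hret y ltac:(apply Rabs_def1; lra)). lra.
Qed.

Lemma in_U_beta_tail_lt_hits_one t a j :
  in_U beta t -> quasi_greedy beta t a -> (1 <= j)%nat -> beta_tail t a j < t ->
  exists i, (1 <= i < j)%nat /\ beta_tail t a i = 1.
Proof.
  intros [[_ Ht1] Hbif] Hq Hj Hxj. apply NNPP. intros Hno.
  set (x := beta_tail t a) in *.
  assert (Hx : forall i, (1 <= i <= j)%nat -> 0 < x i < 1).
  { intros i Hi. split; [apply beta_tail_pos, Hq|].
    destruct (Nat.eq_dec i j) as [->|Hne]; [lra|].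
    destruct (quasi_greedy_beta_tail_le_1 t a i ltac:(lra) Hq) as [Hlt|Heq]; [exact Hlt|].
    exfalso. apply Hno. exists i. split; [lia|exact Heq]. }
  destruct (exists_pos_lower_bound
              (fun i => Rmin (Rmin (x (S i)) (1 - x (S i))) (Rmin (t - x j) (1 - t))) (j - 1))
    as [mu [Hmu Hle]].
  { intros i Hi. pose proof (Hx (S i) ltac:(lia)).
    repeat apply Rmin_glb_lt; lra. }
  assert (Hmu_x : forall i, (1 <= i <= j)%nat -> mu <= x i <= 1 - mu).
  { intros i Hi. specialize (Hle (i - 1)%nat ltac:(lia)). simpl in Hle.
    replace (S (i - 1)) with i in Hle by lia.
    pose proof (Rmin_l (Rmin (x i) (1 - x i)) (Rmin (t - x j) (1 - t))).
    pose proof (Rmin_l (x i) (1 - x i)). pose proof (Rmin_r (x i) (1 - x i)). lra. }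
  assert (Hmu_t : mu <= t - x j /\ mu <= 1 - t).
  { specialize (Hle 0%nat ltac:(lia)). simpl in Hle.
    pose proof (Rmin_r (Rmin (x 1%nat) (1 - x 1%nat)) (Rmin (t - x j) (1 - t))).
    pose proof (Rmin_l (t - x j) (1 - t)). pose proof (Rmin_r (t - x j) (1 - t)). lra. }
  assert (Hbj : 1 <= beta ^ j) by (apply pow_R1_Rle; lra).
  assert (Hdelta : mu / (2 * beta ^ j) <= mu / 2).
  { apply Rmult_le_compat_l; [lra|]. apply Rinv_le_contravar; lra. }
  apply (not_bifurcation_of_uniform_return t j (mu / (2 * beta ^ j))); [|intros y Hy|exact Hbif].
  - split; [apply Rdiv_lt_0_compat; lra|lra].
  - pose proof (iter_Tb_close t a j mu y Hmu Hmu_x Hy) as Hclose.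
    apply Rabs_def2 in Hclose. pose proof (Hmu_x j ltac:(lia)). fold x in Hclose. lra.
Qed.

Lemma exists_lower_bound_tails_of_one t0 : 0 < t0 ->
  exists c, 0 < c <= t0 /\
    forall al, quasi_greedy beta 1 al ->
      forall k, (forall i, (i < k)%nat -> t0 <= beta_tail 1 al i) -> c <= beta_tail 1 al k.
Proof.
  intros Ht0. destruct (classic (exists al, quasi_greedy beta 1 al)) as [[al Hal]|Hnone].
  - destruct (exists_run_lower_bound (beta_tail 1 al) t0 Ht0) as [c [Hc Hrun]].
    { intros k. apply beta_tail_pos, Hal. }
    exists c. split; [exact Hc|]. intros al' Hal'.
    rewrite <- (quasi_greedy_unique 1 al al' Hal Hal'). exact Hrun.
  - exists t0. split; [lra|]. intros al Hal. exfalso. eauto.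
Qed.

Lemma dist_le_of_common_prefix t u a b m :
  t <= 1 -> u <= 1 -> quasi_greedy beta t a -> quasi_greedy beta u b ->
  (forall i, (i < m)%nat -> a i = b i) -> Rabs (t - u) <= / beta ^ m.
Proof.
  intros Ht Hu Hqa Hqb Hpre.
  pose proof (beta_tail_sub_prefix t u a b m m Hpre (le_n m)) as Hd.
  pose proof (beta_tail_pos t a m (proj1 Hqa)). pose proof (beta_tail_pos u b m (proj1 Hqb)).
  pose proof (quasi_greedy_beta_tail_le_1 t a m Ht Hqa).
  pose proof (quasi_greedy_beta_tail_le_1 u b m Hu Hqb).
  pose proof (beta_pow_pos m).
  replace (t - u) with ((beta_tail t a m - beta_tail u b m) * / beta ^ m)
    by (rewrite Hd; field; lra).
  rewrite Rabs_mult, (Rabs_right (/ beta ^ m)) by (left; apply Rinv_0_lt_compat; lra).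
  rewrite <- (Rmult_1_l (/ beta ^ m)) at 2.
  apply Rmult_le_compat_r; [left; apply Rinv_0_lt_compat; lra|]. apply Rabs_le. lra.
Qed.

Lemma beta_tail_succ_le_scaled_dist t u a b m :
  u <= 1 -> quasi_greedy beta u b ->
  (forall i, (i < m)%nat -> a i = b i) -> (b m < a m)%nat ->
  beta_tail t a (S m) <= beta ^ S m * (t - u).
Proof.
  intros Hu Hqb Hpre Hlt.
  pose proof (beta_tail_sub_prefix t u a b m m Hpre (le_n m)) as Hd.
  pose proof (quasi_greedy_beta_tail_le_1 u b (S m) Hu Hqb) as Hy. simpl in Hy |- *.
  assert (INR (b m) + 1 <= INR (a m)) by (rewrite <- S_INR; apply le_INR; lia).
  rewrite Rmult_assoc, <- Hd. lra.
Qed.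

Lemma prefix_beta_tails_gt t u a b m :
  t <= 1 -> u < t -> in_U beta u -> quasi_greedy beta t a -> quasi_greedy beta u b ->
  (forall i, (i < m)%nat -> a i = b i) ->
  forall j, (1 <= j <= m)%nat -> u < beta_tail t a j.
Proof.
  intros Ht Hut HU Hqa Hqb Hpre j Hj.
  assert (Hgap : forall i, (i <= m)%nat -> beta_tail u b i < beta_tail t a i).
  { intros i Hi. pose proof (beta_tail_sub_prefix t u a b m i Hpre Hi).
    assert (0 < beta ^ i * (t - u)) by (apply Rmult_lt_0_compat; [apply beta_pow_pos|lra]).
    lra. }
  apply Rle_lt_trans with (beta_tail u b j); [|apply Hgap; lia].
  apply Rnot_lt_le. intros Hlt.
  destruct (in_U_beta_tail_lt_hits_one u b j HU Hqb ltac:(lia) Hlt) as [i [Hi Hone]].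
  pose proof (Hgap i ltac:(lia)). pose proof (quasi_greedy_beta_tail_le_1 t a i Ht Hqa).
  lra.
Qed.

Section LowerBound.
Variables t0 c : R.
Hypothesis c_le_t0 : c <= t0.
Hypothesis c_bounds_tails_of_one :
  forall al, quasi_greedy beta 1 al ->
    forall k, (forall i, (i < k)%nat -> t0 <= beta_tail 1 al i) -> c <= beta_tail 1 al k.

Lemma beta_tail_succ_ge t a m :
  in_U beta t -> quasi_greedy beta t a ->
  (forall j, (j <= m)%nat -> t0 <= beta_tail t a j) -> c <= beta_tail t a (S m).
Proof.
  intros HU Hq Hrun.
  destruct (Rle_lt_dec t0 (beta_tail t a (S m))) as [Hge|Hlt]; [lra|].
  assert (Ht : t0 <= t) by exact (Hrun 0%nat (Nat.le_0_l m)).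
  destruct (in_U_beta_tail_lt_hits_one t a (S m) HU Hq ltac:(lia) ltac:(lra))
    as [i [Hi Hone]].
  replace (S m) with (i + (S m - i))%nat by lia. rewrite beta_tail_add, Hone.
  apply c_bounds_tails_of_one.
  - rewrite <- Hone. apply quasi_greedy_shift, Hq.
  - intros i' Hi'. rewrite <- Hone, <- beta_tail_add. apply Hrun. lia.
Qed.

Lemma scaled_dist_ge_of_digit_gt t u a b m :
  in_U beta t -> in_U beta u -> t0 <= t <= 1 -> t0 <= u <= 1 ->
  quasi_greedy beta t a -> quasi_greedy beta u b ->
  (forall i, (i < m)%nat -> a i = b i) -> (b m < a m)%nat ->
  c / beta ^ S m <= t - u.
Proof.
  intros HUt HUu Ht Hu Hqa Hqb Hpre Hlt.
  pose proof (beta_tail_succ_le_scaled_dist t u a b m (proj2 Hu) Hqb Hpre Hlt) as Hgap.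
  pose proof (beta_tail_pos t a (S m) (proj1 Hqa)). pose proof (beta_pow_pos (S m)).
  assert (Hut : u < t).
  { apply Rnot_le_lt. intros Htu.
    assert (beta ^ S m * (t - u) <= beta ^ S m * 0) by (apply Rmult_le_compat_l; lra).
    lra. }
  assert (Hc : c <= beta_tail t a (S m)).
  { apply beta_tail_succ_ge; [exact HUt|exact Hqa|].
    intros [|j] Hj; [simpl; lra|].
    pose proof (prefix_beta_tails_gt t u a b m (proj2 Ht) Hut HUu Hqa Hqb Hpre (S j)
                  ltac:(lia)). lra. }
  apply Rmult_le_reg_l with (beta ^ S m); [assumption|].
  replace (beta ^ S m * (c / beta ^ S m)) with c by (field; lra). lra.
Qed.

End LowerBound.

End BetaExpansions.

Theorem mainTheorem8 (beta : R) (hbeta : 1 < beta) (t0 : R) (ht0 : 0 < t0) :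
  exists C1 : R, 0 < C1 /\
    forall (t u : R) (a b : nat -> nat) (m : option nat),
      in_U beta t -> t0 <= t <= 1 ->
      in_U beta u -> t0 <= u <= 1 ->
      quasi_greedy beta t a -> quasi_greedy beta u b ->
      common_prefix a b m ->
      C1 * bpow_neg beta m <= Rabs (t - u) <= bpow_neg beta m.
Proof.
  destruct (exists_lower_bound_tails_of_one beta hbeta t0 ht0) as [c [[Hc0 Hct0] Hc]].
  exists (c / beta). split; [apply Rdiv_lt_0_compat; lra|].
  intros t u a b m HUt Ht HUu Hu Hqa Hqb Hcp.
  destruct m as [m|]; simpl in Hcp |- *.
  - destruct Hcp as [Hpre Hne].
    assert (Hbm : 0 < beta ^ m) by (apply pow_lt; lra).
    split; [|apply (dist_le_of_common_prefix beta hbeta t u a b m); tauto].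
    replace (c / beta * / beta ^ m) with (c / beta ^ S m) by (simpl; field; lra).
    destruct (Nat.lt_total (a m) (b m)) as [Hlt|[Heq|Hgt]]; [|contradiction|].
    + rewrite Rabs_minus_sym. eapply Rle_trans; [|apply Rle_abs].
      apply (scaled_dist_ge_of_digit_gt beta hbeta t0 c Hct0 Hc u t b a m); auto.
      intros i Hi. symmetry. auto.
    + eapply Rle_trans; [|apply Rle_abs].
      exact (scaled_dist_ge_of_digit_gt beta hbeta t0 c Hct0 Hc t u a b m
               HUt HUu Ht Hu Hqa Hqb Hpre Hgt).
  - replace b with a in Hqb by (now apply functional_extensionality).
    rewrite (uniqueness_sum _ t u (proj2 (proj2 (proj1 Hqa))) (proj2 (proj2 (proj1 Hqb)))).
    rewrite Rminus_diag, Rabs_R0. lra.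
Qed.
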